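(* For any $(\boldsymbol{x}^1,\boldsymbol{x}^2),(\boldsymbol{x}^{\star,1},\boldsymbol{x}^{\star,2})\in(\mathbb{T}^3\times\mathbb{T}^3)\setminus\Delta$ there exist $N\in\mathbb{N}$ and $\underline{\omega}^N=(\omega_1,\dots,\omega_N)\in\Omega_0^N$ such that $$f_{\underline{\omega}^N}(\boldsymbol{x}^1)=\boldsymbol{x}^{\star,1}\qquad\text{and}\qquad f_{\underline{\omega}^N}(\boldsymbol{x}^2)=\boldsymbol{x}^{\star,2}.$$
   Context: $\mathbb{T}^3=\mathbb{R}^3/(2\pi\mathbb{Z})^3$ with points $\boldsymbol{x}=(x,y,z)$; $\Delta=\{(\boldsymbol{x}^1,\boldsymbol{x}^2)\in\mathbb{T}^3\times\mathbb{T}^3:\boldsymbol{x}^1=\boldsymbol{x}^2\}$. Fix $U>0$ and let $\Omega_0=[-U,U]^3\times[0,2\pi)^3$, with elements $\omega=(\mathsf{A},\mathsf{B},\mathsf{C},\alpha,\beta,\gamma)$. Define maps of $\mathbb{T}^3$: $f_{(\mathsf{A},\alpha)}(x,y,z)=(x+\mathsf{A}\sin(z+\alpha),\ y+\mathsf{A}\cos(z+\alpha),\ z)$, $f_{(\mathsf{B},\beta)}(x,y,z)=(x,\ y+\mathsf{B}\sin(x+\beta),\ z+\mathsf{B}\cos(x+\beta))$, $f_{(\mathsf{C},\gamma)}(x,y,z)=(x+\mathsf{C}\cos(y+\gamma),\ y,\ z+\mathsf{C}\sin(y+\gamma))$, and $f_\omega=f_{(\mathsf{C},\gamma)}\circ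 f_{(\mathsf{B},\beta)}\circ f_{(\mathsf{A},\alpha)}$. For $\underline{\omega}^N=(\omega_1,\dots,\omega_N)$, $f_{\underline{\omega}^N}=f_{\omega_N}\circ\cdots\circ f_{\omega_1}$. *)

From Stdlib Require Import Reals List.
Open Scope R_scope.

(* Points of R^3; the torus T^3 = R^3/(2 pi Z)^3 is represented by R^3 with
   equality modulo 2 pi in each coordinate. *)
Definition pt := (R * R * R)%type.

Definition cong2pi (a b : R) : Prop := exists k : Z, a - b = 2 * PI * IZR k.

Definition torus_eq (p q : pt) : Prop :=
  match p, q with
  | (x, y, z), (x', y', z') => cong2pi x x' /\ cong2pi y y' /\ cong2pi z z'
  end.

Record omega := mkOmega { oA : R; oB : R; oC : R; oal : R; obe : R; oga : R }.

Definition in_Omega0 (U : R) (w : omega) : Prop :=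
  -U <= oA w <= U /\ -U <= oB w <= U /\ -U <= oC w <= U /\
  0 <= oal w < 2 * PI /\ 0 <= obe w < 2 * PI /\ 0 <= oga w < 2 * PI.

Definition fA (A al : R) (p : pt) : pt :=
  match p with (x, y, z) => (x + A * sin (z + al), y + A * cos (z + al), z) end.
Definition fB (B be : R) (p : pt) : pt :=
  match p with (x, y, z) => (x, y + B * sin (x + be), z + B * cos (x + be)) end.
Definition fC (C ga : R) (p : pt) : pt :=
  match p with (x, y, z) => (x + C * cos (y + ga), y, z + C * sin (y + ga)) end.

(* f_omega = f_C o f_B o f_A (lifted to R^3; it descends to T^3) *)
Definition f_omega (w : omega) (p : pt) : pt :=
  fC (oC w) (oga w) (fB (oB w) (obe w) (fA (oA w) (oal w) p)).

(* f_{(w_1,...,w_N)} = f_{w_N} o ... o f_{w_1}: w_1 is applied first *)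
Fixpoint f_seq (ws : list omega) (p : pt) : pt :=
  match ws with
  | nil => p
  | w :: ws' => f_seq ws' (f_omega w p)
  end.

(* Each of the shears fA, fB, fC, with arbitrary amplitude and arbitrary phase,
   is a composition of admissible maps: shears of a fixed phase form a
   one-parameter group, so a large amplitude splits into n equal small ones,
   and phases only matter modulo 2 pi.  Choosing the phase so that the driving
   coordinates of the two points sit symmetrically about an extremum of cos
   (resp. sin), a single shear changes one coordinate of the difference
   p2 - p1 to any prescribed value and leaves the other two unchanged, as long
   as the driving coordinate of the difference is not in 2 pi Z.  Since the
   pair is off the diagonal, five such moves bring the difference to
   (0, pi, 0), and three more shears translate the pair onto
   ((0,0,0), (0,pi,0)).  Admissible compositions are invertible, so any two
   off-diagonal pairs are connected through this canonical pair. *)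
From Stdlib Require Import Reals List Lra.
Open Scope R_scope.

Lemma sin_cos_add_2PI_multiple (x : R) (k : Z) :
  sin (x + 2 * PI * IZR k) = sin x /\ cos (x + 2 * PI * IZR k) = cos x.
Proof.
  assert (Hs : sin (IZR k * PI) = 0) by (apply sin_eq_0_1; eauto).
  replace (2 * PI * IZR k) with (2 * (IZR k * PI)) by ring.
  rewrite sin_plus, cos_plus, sin_2a, cos_2a_sin, Hs. split; ring.
Qed.

Lemma phase_reduction (a : R) :
  exists k : Z, 0 <= a + 2 * PI * IZR k < 2 * PI.
Proof.
  pose proof PI_RGT_0 as Hpi.
  destruct (archimed (a / (2 * PI))) as [H1 H2].
  exists (1 - up (a / (2 * PI)))%Z.
  rewrite minus_IZR.
  assert (Ha : a = a / (2 * PI) * (2 * PI)) by (field; lra).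
  split; nra.
Qed.

Lemma torus_eq_refl (p : pt) : torus_eq p p.
Proof.
  destruct p as [[x y] z]; repeat split; exists 0%Z; simpl; ring.
Qed.

Lemma pt_eq (x y z x' y' z' : R) :
  x = x' -> y = y' -> z = z' -> (x, y, z) = (x', y', z').
Proof. intros -> -> ->; reflexivity. Qed.

Ltac shear_identity :=
  intros; match goal with p : pt |- _ => destruct p as [[? ?] ?] end;
  unfold fA, fB, fC; apply pt_eq; ring.

Ltac shear_periodicity k :=
  intros; match goal with p : pt |- _ => destruct p as [[? ?] ?] end;
  unfold fA, fB, fC; rewrite <- Rplus_assoc;
  match goal with |- context [sin (?u + 2 * PI * IZR k)] =>
    destruct (sin_cos_add_2PI_multiple u k) as [-> ->] end;
  reflexivity.

Lemma fA0 (al : R) (p : pt) : fA 0 al p = p.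
Proof. shear_identity. Qed.
Lemma fB0 (be : R) (p : pt) : fB 0 be p = p.
Proof. shear_identity. Qed.
Lemma fC0 (ga : R) (p : pt) : fC 0 ga p = p.
Proof. shear_identity. Qed.

Lemma fA_add (a b al : R) (p : pt) : fA b al (fA a al p) = fA (a + b) al p.
Proof. shear_identity. Qed.
Lemma fB_add (a b be : R) (p : pt) : fB b be (fB a be p) = fB (a + b) be p.
Proof. shear_identity. Qed.
Lemma fC_add (a b ga : R) (p : pt) : fC b ga (fC a ga p) = fC (a + b) ga p.
Proof. shear_identity. Qed.

Lemma fA_periodic (a al : R) (k : Z) (p : pt) :
  fA a (al + 2 * PI * IZR k) p = fA a al p.
Proof. shear_periodicity k. Qed.
Lemma fB_periodic (a be : R) (k : Z) (p : pt) :
  fB a (be + 2 * PI * IZR k) p = fB a be p.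
Proof. shear_periodicity k. Qed.
Lemma fC_periodic (a ga : R) (k : Z) (p : pt) :
  fC a (ga + 2 * PI * IZR k) p = fC a ga p.
Proof. shear_periodicity k. Qed.

Definition omegaA (a al : R) : omega := mkOmega a 0 0 al 0 0.
Definition omegaB (b be : R) : omega := mkOmega 0 b 0 0 be 0.
Definition omegaC (c ga : R) : omega := mkOmega 0 0 c 0 0 ga.

Lemma f_omegaA (a al : R) (p : pt) : f_omega (omegaA a al) p = fA a al p.
Proof. unfold f_omega; simpl. rewrite fB0, fC0. reflexivity. Qed.
Lemma f_omegaB (b be : R) (p : pt) : f_omega (omegaB b be) p = fB b be p.
Proof. unfold f_omega; simpl. rewrite fA0, fC0. reflexivity. Qed.
Lemma f_omegaC (c ga : R) (p : pt) : f_omega (omegaC c ga) p = fC c ga p.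
Proof. unfold f_omega; simpl. rewrite fA0, fB0. reflexivity. Qed.

Lemma f_seq_app (ws1 ws2 : list omega) (p : pt) :
  f_seq (ws1 ++ ws2) p = f_seq ws2 (f_seq ws1 p).
Proof. revert p; induction ws1; simpl; auto. Qed.

Section Generated.

Variable U : R.
Hypothesis hU : 0 < U.

Definition admissible (ws : list omega) : Prop := forall w, In w ws -> in_Omega0 U w.

Definition generated (h : pt -> pt) : Prop :=
  exists ws, admissible ws /\ forall p, f_seq ws p = h p.

Lemma generated_id : generated (fun p => p).
Proof. exists nil; split; [intros w []|reflexivity]. Qed.

Lemma generated_comp (h1 h2 : pt -> pt) :
  generated h1 -> generated h2 -> generated (fun p => h2 (h1 p)).
Proof.
  intros [ws1 [A1 E1]] [ws2 [A2 E2]]. exists (ws1 ++ ws2). split.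
  - intros w Hw. apply in_app_or in Hw as [Hw|Hw]; auto.
  - intro p. rewrite f_seq_app, E1, E2. reflexivity.
Qed.

Section Shear.

Variable g : R -> R -> pt -> pt.
Variable elem : R -> R -> omega.
Hypothesis f_omega_elem : forall a al p, f_omega (elem a al) p = g a al p.
Hypothesis elem_in_Omega0 :
  forall a al, -U <= a <= U -> 0 <= al < 2 * PI -> in_Omega0 U (elem a al).
Hypothesis g0 : forall al p, g 0 al p = p.
Hypothesis g_add : forall a b al p, g b al (g a al p) = g (a + b) al p.
Hypothesis g_periodic : forall a al k p, g a (al + 2 * PI * IZR k) p = g a al p.

Lemma f_seq_repeat_elem (b al : R) (m : nat) (p : pt) :
  f_seq (repeat (elem b al) m) p = g (INR m * b) al p.
Proof.
  revert p; induction m as [|m IH]; intro p; simpl.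
  - rewrite Rmult_0_l, g0. reflexivity.
  - rewrite IH, f_omega_elem, g_add. f_equal. destruct m; simpl; ring.
Qed.

Lemma generated_shear (a al : R) : generated (g a al).
Proof.
  destruct (INR_archimed U (Rabs a) hU) as [n Hn].
  assert (Hpos : 0 < INR n) by (pose proof (Rabs_pos a); nra).
  destruct (phase_reduction al) as [k Hk].
  exists (repeat (elem (a / INR n) (al + 2 * PI * IZR k)) n). split.
  - intros w Hw. apply repeat_spec in Hw as ->. apply elem_in_Omega0; [|exact Hk].
    assert (Habs : Rabs (a / INR n) < U).
    { unfold Rdiv. rewrite Rabs_mult, Rabs_inv, (Rabs_right (INR n)) by lra.
      apply (Rmult_lt_reg_r (INR n)); [exact Hpos|]. field_simplify; lra. }
    apply Rabs_def2 in Habs. lra.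
  - intro p. rewrite f_seq_repeat_elem, g_periodic.
    f_equal. field. lra.
Qed.

End Shear.

Lemma mkOmega_in_Omega0 (a b c al be ga : R) :
  -U <= a <= U -> -U <= b <= U -> -U <= c <= U ->
  0 <= al < 2 * PI -> 0 <= be < 2 * PI -> 0 <= ga < 2 * PI ->
  in_Omega0 U (mkOmega a b c al be ga).
Proof. unfold in_Omega0; simpl; tauto. Qed.

Ltac omega0_bounds := pose proof PI_RGT_0; split; lra.

Lemma generated_fA (a al : R) : generated (fA a al).
Proof.
  apply (generated_shear fA omegaA f_omegaA); auto using fA0, fA_add, fA_periodic.
  intros; apply mkOmega_in_Omega0; auto; omega0_bounds.
Qed.

Lemma generated_fB (b be : R) : generated (fB b be).
Proof.
  apply (generated_shear fB omegaB f_omegaB); auto using fB0, fB_add, fB_periodic.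
  intros; apply mkOmega_in_Omega0; auto; omega0_bounds.
Qed.

Lemma generated_fC (c ga : R) : generated (fC c ga).
Proof.
  apply (generated_shear fC omegaC f_omegaC); auto using fC0, fC_add, fC_periodic.
  intros; apply mkOmega_in_Omega0; auto; omega0_bounds.
Qed.

Lemma generated_f_omega_inverse (w : omega) :
  generated (fun p => fA (- oA w) (oal w) (fB (- oB w) (obe w) (fC (- oC w) (oga w) p))).
Proof.
  apply generated_comp; [apply generated_comp|];
    auto using generated_fA, generated_fB, generated_fC.
Qed.

Lemma admissible_left_inverse (ws : list omega) :
  admissible ws -> exists h', generated h' /\ forall p, h' (f_seq ws p) = p.
Proof.
  induction ws as [|w ws IH]; intro A.
  - exists (fun p => p). split; [exact generated_id | reflexivity].
  - destruct IH as [h' [G' E']]; [intros v Hv; apply A; right; exact Hv|].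
    eexists; split; [exact (generated_comp _ _ G' (generated_f_omega_inverse w))|].
    intro p; simpl. rewrite E'. unfold f_omega.
    rewrite fC_add, Rplus_opp_r, fC0, fB_add, Rplus_opp_r, fB0,
      fA_add, Rplus_opp_r, fA0.
    reflexivity.
Qed.

Definition reach (p1 p2 q1 q2 : pt) : Prop :=
  exists h, generated h /\ h p1 = q1 /\ h p2 = q2.

Lemma reach_refl (p1 p2 : pt) : reach p1 p2 p1 p2.
Proof. exists (fun p => p). split; [exact generated_id | auto]. Qed.

Lemma reach_trans (p1 p2 q1 q2 r1 r2 : pt) :
  reach p1 p2 q1 q2 -> reach q1 q2 r1 r2 -> reach p1 p2 r1 r2.
Proof.
  intros [h1 [G1 [<- <-]]] [h2 [G2 [<- <-]]].
  exists (fun p => h2 (h1 p)). split; [apply generated_comp|]; auto.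
Qed.

Lemma reach_sym (p1 p2 q1 q2 : pt) : reach p1 p2 q1 q2 -> reach q1 q2 p1 p2.
Proof.
  intros [h [[ws [A E]] [<- <-]]].
  destruct (admissible_left_inverse ws A) as [h' [G' E']].
  exists h'. rewrite <- !E. auto.
Qed.

End Generated.

Definition gap (p q : pt) : pt :=
  match p, q with (x, y, z), (x', y', z') => (x' - x, y' - y, z' - z) end.

Lemma cong2pi_of_sin_half_gap (a b : R) : sin ((b - a) / 2) = 0 -> cong2pi a b.
Proof.
  intro H. apply sin_eq_0_0 in H as [k Hk].
  exists (- k)%Z. rewrite opp_IZR. lra.
Qed.

Lemma gap_off_diagonal (p1 p2 : pt) (gx gy gz : R) :
  ~ torus_eq p1 p2 -> gap p1 p2 = (gx, gy, gz) ->
  sin (gx / 2) <> 0 \/ sin (gy / 2) <> 0 \/ sin (gz / 2) <> 0.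
Proof.
  destruct p1 as [[x1 y1] z1], p2 as [[x2 y2] z2]; simpl.
  intros Hn Hg; injection Hg as <- <- <-.
  destruct (Req_dec (sin ((x2 - x1) / 2)) 0) as [Hx|]; [|auto].
  destruct (Req_dec (sin ((y2 - y1) / 2)) 0) as [Hy|]; [|auto].
  destruct (Req_dec (sin ((z2 - z1) / 2)) 0) as [Hz|]; [|auto].
  exfalso; apply Hn; auto using cong2pi_of_sin_half_gap.
Qed.

(* The phase puts u1 and u2 symmetrically about pi/2, an extremum of sin. *)
Lemma shear_phase_equal_sin (u1 u2 d : R) : sin ((u2 - u1) / 2) <> 0 ->
  exists K al, sin (u2 + al) = sin (u1 + al) /\ K * cos (u2 + al) - K * cos (u1 + al) = d.
Proof.
  intro Hs. set (e := (u2 - u1) / 2).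
  exists (- d / (2 * sin e)), (PI / 2 - (u1 + u2) / 2).
  replace (u1 + (PI / 2 - (u1 + u2) / 2)) with (PI / 2 - e) by (unfold e; field).
  replace (u2 + (PI / 2 - (u1 + u2) / 2)) with (PI / 2 - - e) by (unfold e; field).
  rewrite !sin_shift, !cos_shift, cos_neg, sin_neg. split; [reflexivity|]. field; auto.
Qed.

(* The phase puts u1 and u2 symmetrically about 0, an extremum of cos. *)
Lemma shear_phase_equal_cos (u1 u2 d : R) : sin ((u2 - u1) / 2) <> 0 ->
  exists K al, cos (u2 + al) = cos (u1 + al) /\ K * sin (u2 + al) - K * sin (u1 + al) = d.
Proof.
  intro Hs. set (e := (u2 - u1) / 2).
  exists (d / (2 * sin e)), (- ((u1 + u2) / 2)).
  replace (u1 + - ((u1 + u2) / 2)) with (- e) by (unfold e; field).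
  replace (u2 + - ((u1 + u2) / 2)) with e by (unfold e; field).
  rewrite cos_neg, sin_neg. split; [reflexivity|]. field; auto.
Qed.

Section GapMoves.

Variable U : R.
Hypothesis hU : 0 < U.

Ltac gap_move shear generated_g phase_lemma u1 u2 target :=
  destruct (phase_lemma u1 u2 target) as [K [al [Heq Hd]]]; [assumption|];
  match goal with |- exists q1 q2, reach _ ?p1 ?p2 q1 q2 /\ _ =>
    exists (shear K al p1), (shear K al p2) end; split;
  [exists (shear K al); split; [apply generated_g; exact hU | split; reflexivity]
  |simpl; rewrite Heq; apply pt_eq; lra].

Lemma gap_set_y_by_fA (p1 p2 : pt) (gx gy gz t : R) :
  gap p1 p2 = (gx, gy, gz) -> sin (gz / 2) <> 0 ->
  exists q1 q2, reach U p1 p2 q1 q2 /\ gap q1 q2 = (gx, t, gz).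
Proof.
  destruct p1 as [[x1 y1] z1], p2 as [[x2 y2] z2]; simpl; intros [= <- <- <-] Hs.
  gap_move fA generated_fA shear_phase_equal_sin z1 z2 (t - (y2 - y1)).
Qed.

Lemma gap_set_y_by_fB (p1 p2 : pt) (gx gy gz t : R) :
  gap p1 p2 = (gx, gy, gz) -> sin (gx / 2) <> 0 ->
  exists q1 q2, reach U p1 p2 q1 q2 /\ gap q1 q2 = (gx, t, gz).
Proof.
  destruct p1 as [[x1 y1] z1], p2 as [[x2 y2] z2]; simpl; intros [= <- <- <-] Hs.
  gap_move fB generated_fB shear_phase_equal_cos x1 x2 (t - (y2 - y1)).
Qed.

Lemma gap_set_x_by_fC (p1 p2 : pt) (gx gy gz t : R) :
  gap p1 p2 = (gx, gy, gz) -> sin (gy / 2) <> 0 ->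
  exists q1 q2, reach U p1 p2 q1 q2 /\ gap q1 q2 = (t, gy, gz).
Proof.
  destruct p1 as [[x1 y1] z1], p2 as [[x2 y2] z2]; simpl; intros [= <- <- <-] Hs.
  gap_move fC generated_fC shear_phase_equal_sin y1 y2 (t - (x2 - x1)).
Qed.

Lemma gap_set_z_by_fC (p1 p2 : pt) (gx gy gz t : R) :
  gap p1 p2 = (gx, gy, gz) -> sin (gy / 2) <> 0 ->
  exists q1 q2, reach U p1 p2 q1 q2 /\ gap q1 q2 = (gx, gy, t).
Proof.
  destruct p1 as [[x1 y1] z1], p2 as [[x2 y2] z2]; simpl; intros [= <- <- <-] Hs.
  gap_move fC generated_fC shear_phase_equal_cos y1 y2 (t - (z2 - z1)).
Qed.

Lemma sin_PI2_neq0 : sin (PI / 2) <> 0.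
Proof. rewrite sin_PI2; lra. Qed.

Lemma reach_gap_y_nondegenerate (p1 p2 : pt) : ~ torus_eq p1 p2 ->
  exists q1 q2 gx gy gz,
    reach U p1 p2 q1 q2 /\ gap q1 q2 = (gx, gy, gz) /\ sin (gy / 2) <> 0.
Proof.
  intro Hn.
  destruct (gap p1 p2) as [[gx gy] gz] eqn:G.
  destruct (gap_off_diagonal p1 p2 gx gy gz Hn G) as [Hx|[Hy|Hz]].
  - destruct (gap_set_y_by_fB p1 p2 gx gy gz PI G Hx) as [q1 [q2 [R Gq]]].
    exists q1, q2, gx, PI, gz. auto using sin_PI2_neq0.
  - exists p1, p2, gx, gy, gz. auto using reach_refl.
  - destruct (gap_set_y_by_fA p1 p2 gx gy gz PI G Hz) as [q1 [q2 [R Gq]]].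
    exists q1, q2, gx, PI, gz. auto using sin_PI2_neq0.
Qed.

Lemma reach_canonical_of_gap (p1 p2 : pt) :
  gap p1 p2 = (0, PI, 0) -> reach U p1 p2 (0, 0, 0) (0, PI, 0).
Proof.
  destruct p1 as [[x y] z], p2 as [[x2 y2] z2]; simpl; intro Hg.
  injection Hg as Hx Hy Hz.
  replace x2 with x by lra; replace y2 with (y + PI) by lra; replace z2 with z by lra.
  apply (reach_trans U _ _ (0, y, z) (0, y + PI, z)).
  { exists (fA (- x) (PI / 2 - z)). split; [apply generated_fA; exact hU|].
    unfold fA. replace (z + (PI / 2 - z)) with (PI / 2) by ring.
    rewrite sin_PI2, cos_PI2. split; apply pt_eq; ring. }
  apply (reach_trans U _ _ (0, 0, z) (0, PI, z)).
  { exists (fA (- y) (- z)). split; [apply generated_fA; exact hU|].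
    unfold fA. replace (z + - z) with 0 by ring.
    rewrite sin_0, cos_0. split; apply pt_eq; ring. }
  exists (fB (- z) 0). split; [apply generated_fB; exact hU|].
  unfold fB. rewrite !Rplus_0_r, sin_0, cos_0. split; apply pt_eq; ring.
Qed.

Lemma reach_canonical (p1 p2 : pt) :
  ~ torus_eq p1 p2 -> reach U p1 p2 (0, 0, 0) (0, PI, 0).
Proof.
  intro Hn.
  destruct (reach_gap_y_nondegenerate p1 p2 Hn)
    as (q1 & q2 & gx & gy & gz & R1 & G1 & Hgy).
  destruct (gap_set_x_by_fC q1 q2 gx gy gz PI G1 Hgy) as (r1 & r2 & R2 & G2).
  destruct (gap_set_y_by_fB r1 r2 PI gy gz PI G2 sin_PI2_neq0) as (s1 & s2 & R3 & G3).
  destruct (gap_set_x_by_fC s1 s2 PI PI gz 0 G3 sin_PI2_neq0) as (t1 & t2 & R4 & G4).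
  destruct (gap_set_z_by_fC t1 t2 0 PI gz 0 G4 sin_PI2_neq0) as (u1 & u2 & R5 & G5).
  apply (reach_trans U _ _ _ _ _ _ R1), (reach_trans U _ _ _ _ _ _ R2),
    (reach_trans U _ _ _ _ _ _ R3), (reach_trans U _ _ _ _ _ _ R4),
    (reach_trans U _ _ _ _ _ _ R5).
  exact (reach_canonical_of_gap u1 u2 G5).
Qed.

End GapMoves.

Theorem proposition3p6 (U : R) (hU : 0 < U) (x1 x2 y1 y2 : pt) :
  ~ torus_eq x1 x2 -> ~ torus_eq y1 y2 ->
  exists ws : list omega,
    (forall w, In w ws -> in_Omega0 U w) /\
    torus_eq (f_seq ws x1) y1 /\ torus_eq (f_seq ws x2) y2.
Proof.
  intros Hx Hy.
  assert (Hxy : reach U x1 x2 y1 y2).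
  { apply (reach_trans U x1 x2 (0, 0, 0) (0, PI, 0)).
    - exact (reach_canonical U hU x1 x2 Hx).
    - exact (reach_sym U hU _ _ _ _ (reach_canonical U hU y1 y2 Hy)). }
  destruct Hxy as [h [[ws [Hws Ews]] [<- <-]]].
  exists ws. rewrite !Ews. auto using torus_eq_refl.
Qed.
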